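(* Let $Z$ be the twistor space of $\mathbb H^4$ and let $\mathbb Z_2^3$ act on $\mathbb H^4$ (ball model, coordinates $x_1,\dots,x_4$ centred at a point $p$) by the maps $(x_1,x_2,x_3,x_4)\mapsto(\pm x_1,\pm x_2,\pm x_3,\pm x_4)$ with an even number of sign changes; let $\mathbb Z_2^3$ act on $Z$ by the induced action. For $i\neq j$ let $\Pi_{ij}\subset\mathbb H^4$ be the totally geodesic coordinate $2$-plane in the $(x_i,x_j)$ directions; each $\Pi_{ij}$ has two twistor lifts to $Z$, giving twelve surfaces in $Z$. Then the points of $Z$ with non-trivial stabilizer are of two types: (1) there are exactly $6$ points with stabilizer $\mathbb Z_2^2$; they lie on the twistor fibre $t^{-1}(p)$ over $p$, arranged as the vertices of an octahedron, and each pair of opposite vertices forms an orbit of the $\mathbb Z_2^3$-action; (2) the remaining points with non-trivial stabilizer have stabilizer $\mathbb Z_2$; they form the union of the fibre $t^{-1}(p)$ and the twelve lifted surfaces, with the six points of (1) removed.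
   Context: The twistor space of $\mathbb H^4$ (with a fixed orientation) is $Z=\mathrm{SO}_0(4,1)/\mathrm U(2)$, the coadjoint orbit of $\mathrm{SO}_0(4,1)$ through an element $\begin{pmatrix}0&0\\0&J_0\end{pmatrix}$ with $J_0\in\mathfrak{so}(4)$, $J_0^2=-1$. The natural fibration $t\colon Z\to \mathrm{SO}_0(4,1)/\mathrm{SO}(4)=\mathbb H^4$ identifies the fibre $t^{-1}(q)\cong S^2$ with the set of linear complex structures on $T_q\mathbb H^4$ orthogonal for the hyperbolic metric and inducing the given orientation. An isometry of $\mathbb H^4$ preserving orientation acts on $Z$ naturally. The twistor lift of an oriented totally geodesic plane $\Pi\subset\mathbb H^4$ is the surface $\{J\in t^{-1}(q): q\in\Pi,\ T_q\Pi \text{ is a } J\text{-complex line, with orientation induced by } J \text{ agreeing with that of } \Pi\}$; the two orientations of $\Pi$ give two disjoint lifts. *)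

From HB Require Import structures.
From mathcomp Require Import all_boot all_order all_algebra.
From mathcomp Require Import reals.
Set Implicit Arguments. Unset Strict Implicit. Unset Printing Implicit Defensive.
Import Order.TTheory GRing.Theory Num.Theory.
Local Open Scope ring_scope.

Section Twistor.
Variable R : realType.

(** Ball model of H^4: points are column vectors of R^4 with |x| < 1,
    coordinates x_1..x_4 are indices 0..3, centre p = origin. *)
Definition sqnorm (x : 'cV[R]_4) : R := \sum_(i < 4) x i 0 ^+ 2.
Definition in_ball (x : 'cV[R]_4) : Prop := sqnorm x < 1.
Definition dot (u v : 'cV[R]_4) : R := \sum_(i < 4) u i 0 * v i 0.

Definition hyp_metric (q u v : 'cV[R]_4) : R :=
  4 / (1 - sqnorm q) ^+ 2 * dot u v.

Definition frame4 (a b c d : 'cV[R]_4) : 'M[R]_4 :=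
  \matrix_(r < 4, k < 4)
    (match val k with 0 => a | 1 => b | 2 => c | _ => d end) r 0.

(** Linear complex structure J on T_q H^4 = R^4, orthogonal for the
    hyperbolic metric at q, inducing the given (standard) orientation:
    every real frame (v, Jv, w, Jw) coming from a complex frame (v, w)
    is positively oriented (degenerate ones give det = 0). *)
Definition twistor_point (q : 'cV[R]_4) (J : 'M[R]_4) : Prop :=
  in_ball q /\
  J *m J = - 1%:M /\
  (forall u v : 'cV[R]_4, hyp_metric q (J *m u) (J *m v) = hyp_metric q u v) /\
  (forall v w : 'cV[R]_4, 0 <= \det (frame4 v (J *m v) w (J *m w))).

Definition in_fibre_p (q : 'cV[R]_4) (J : 'M[R]_4) : Prop := q = 0.

(** Group Z_2^3: sign patterns (true = sign change) with an even number
    of sign changes. *)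
Definition evenb (s : {ffun 'I_4 -> bool}) : bool :=
  ~~ odd #|[set i | s i]|.
Definition G : {set {ffun 'I_4 -> bool}} := [set s | evenb s].

Definition signmx (s : {ffun 'I_4 -> bool}) : 'M[R]_4 :=
  diag_mx (\row_i (if s i then -1 else 1)).

(** Induced action on Z: (q, J) |-> (D q, dD J dD^{-1}) with dD = D, D^{-1} = D. *)
Definition act (s : {ffun 'I_4 -> bool}) (z : 'cV[R]_4 * 'M[R]_4)
  : 'cV[R]_4 * 'M[R]_4 :=
  (signmx s *m z.1, signmx s *m z.2 *m signmx s).

Definition stab (q : 'cV[R]_4) (J : 'M[R]_4) : {set {ffun 'I_4 -> bool}} :=
  [set s in G | act s (q, J) == (q, J)].

Definition basis_vec (i : 'I_4) : 'cV[R]_4 := \col_k (k == i)%:R.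

(** Twistor lift of Pi_{ij} with the orientation given by the ordered
    basis (e_i, e_j): q in Pi_ij, T_q Pi_ij = span(e_i, e_j) is J-stable,
    and (e_i, J e_i) is positively oriented w.r.t. (e_i, e_j).
    The twelve surfaces are indexed by ordered pairs i <> j; (j,i) is
    the lift of the opposite orientation. *)
Definition in_lift (i j : 'I_4) (q : 'cV[R]_4) (J : 'M[R]_4) : Prop :=
  i != j /\
  (forall k : 'I_4, k != i -> k != j -> q k 0 = 0) /\
  (exists a b c d : R,
      J *m basis_vec i = a *: basis_vec i + b *: basis_vec j /\
      J *m basis_vec j = c *: basis_vec i + d *: basis_vec j /\
      0 < b).

(** Frobenius inner product on matrices (the fibre sits in so(4)). *)
Definition mxdot (A B : 'M[R]_4) : R := \tr (A^T *m B).

End Twistor.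

(* An element [s] of [G] fixes [(q, J)] iff [q] vanishes on the coordinates
   flipped by [s] and [J] commutes with the reflection [signmx s].  Besides the
   identity, [G] contains [-1], which fixes exactly the fibre [q = 0], and three
   complementary pairs of flips of two coordinates; both flips of a pair fix the
   same splitting of [R^4] into coordinate planes, {01|23}, {02|13} or {03|12}.
   An orthogonal complex structure preserves at most one of these splittings
   (two of them would force [J e_0 = 0]), and by the orientation condition the
   ones preserving a given splitting are [±J_k].  So stabilizers have order 1, 2
   or 4, with 4 exactly at the six points [(0, ±J_k)]; and a flip fixes [(q, J)]
   iff [q] lies in a coordinate plane that is [J]-complex, i.e. iff [(q, J)] lies
   on a twistor lift of that plane. *)

From HB Require Import structures.
From mathcomp Require Import all_boot all_order all_algebra.
From mathcomp Require Import reals ring lra zify.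
Import Order.TTheory GRing.Theory Num.Theory.
Local Open Scope ring_scope.
Set Implicit Arguments. Unset Strict Implicit.

Notation o0 := (@Ordinal 4 0 isT).
Notation o1 := (@Ordinal 4 1 isT).
Notation o2 := (@Ordinal 4 2 isT).
Notation o3 := (@Ordinal 4 3 isT).

Lemma ord4P (P : 'I_4 -> Prop) : P o0 -> P o1 -> P o2 -> P o3 -> forall i, P i.
Proof.
by move=> P0 P1 P2 P3 [[|[|[|[|n]]]] lt_n4] //; rewrite (bool_irrelevance lt_n4 isT).
Qed.

Lemma big_ord4 (T : Type) (idx : T) (op : Monoid.law idx) (F : 'I_4 -> T) :
  \big[op/idx]_(i < 4) F i = op (op (op (F o0) (F o1)) (F o2)) (F o3).
Proof.
rewrite !big_ord_recr big_ord0 /= Monoid.mul1m.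
by congr (op (op (op (F _) (F _)) (F _)) (F _)); apply: val_inj.
Qed.

Lemma forall_ord4 (P : 'I_4 -> bool) : [forall k, P k] = [&& P o0, P o1, P o2 & P o3].
Proof. by apply/forallP/and4P => [P_ | [P0 P1 P2 P3]]; [split; apply: P_ | apply: ord4P]. Qed.

Definition sgn4 (b0 b1 b2 b3 : bool) : {ffun 'I_4 -> bool} :=
  [ffun i : 'I_4 => nth false [:: b0; b1; b2; b3] i].

Lemma sgn4_eta (s : {ffun 'I_4 -> bool}) : s = sgn4 (s o0) (s o1) (s o2) (s o3).
Proof. by apply/ffunP; apply: ord4P; rewrite ffunE. Qed.

Lemma card_sgn4 (A : {set {ffun 'I_4 -> bool}}) : #|A| =
  (\sum_(b0 : bool) \sum_(b1 : bool) \sum_(b2 : bool) \sum_(b3 : bool)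
     (sgn4 b0 b1 b2 b3 \in A))%N.
Proof.
pose sgn4p (b : bool * (bool * (bool * bool))) := sgn4 b.1 b.2.1 b.2.2.1 b.2.2.2.
pose unsgn4 (s : {ffun 'I_4 -> bool}) := (s o0, (s o1, (s o2, s o3))).
have sgn4pK : cancel sgn4p unsgn4 by case=> ? [? [? ?]]; rewrite /unsgn4 !ffunE.
have unsgn4K : cancel unsgn4 sgn4p by move=> s; rewrite [RHS]sgn4_eta.
rewrite -sum1_card big_mkcond (reindex sgn4p) /=; last by exists unsgn4.
pose F s := (if s \in A then 1 else 0)%N.
rewrite -(pair_bigA _ (fun a p => F (sgn4p (a, p)))); apply: eq_bigr => b0 _.
rewrite -(pair_bigA _ (fun a p => F (sgn4p (b0, (a, p))))); apply: eq_bigr => b1 _.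
rewrite -(pair_bigA _ (fun a p => F (sgn4p (b0, (b1, (a, p)))))); apply: eq_bigr => b2 _.
by apply: eq_bigr => b3 _; rewrite /F; case: (_ \in A).
Qed.

Lemma evenb_sgn4 b0 b1 b2 b3 : evenb (sgn4 b0 b1 b2 b3) = ~~ odd (b0 + b1 + b2 + b3)%N.
Proof.
rewrite /evenb -sum1dep_card big_mkcond /= big_ord4 !ffunE /=.
by case: b0; case: b1; case: b2; case: b3.
Qed.

Section Stabilizer.
Variable R : realType.

Lemma mul_signmx_l n s (A : 'M[R]_(4, n)) i j :
  (signmx R s *m A) i j = (if s i then -1 else 1) * A i j.
Proof. by rewrite mul_diag_mx !mxE. Qed.

Lemma mul_signmx_r s (A : 'M[R]_4) i j :
  (A *m signmx R s) i j = A i j * (if s j then -1 else 1).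
Proof. by rewrite mul_mx_diag !mxE. Qed.

Lemma sign_mul_eq (b : bool) (x : R) :
  ((if b then -1 else 1) * x == x) = (b ==> (x == 0)).
Proof. by case: b; rewrite ?mul1r ?eqxx //; apply/eqP/eqP; lra. Qed.

Lemma sign_conj_eq (a b : bool) (x : R) :
  ((if a then -1 else 1) * x * (if b then -1 else 1) == x) = ((a != b) ==> (x == 0)).
Proof.
by case: a; case: b; rewrite /= ?mul1r ?mulr1 ?mulN1r ?mulrN1 ?opprK ?eqxx //;
  apply/eqP/eqP; lra.
Qed.

Definition fixes_point (q : 'cV[R]_4) (s : {ffun 'I_4 -> bool}) :=
  [forall k, s k ==> (q k 0 == 0)].

(* The entrywise form of [signmx s *m J = J *m signmx s]. *)
Definition sign_commute (J : 'M[R]_4) (s : {ffun 'I_4 -> bool}) :=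
  [forall a, forall b, (s a != s b) ==> (J a b == 0)].

Lemma stabE q J s :
  (s \in stab q J) = [&& s \in G, fixes_point q s & sign_commute J s].
Proof.
rewrite inE /act /= xpair_eqE; congr (_ && (_ && _)).
  apply/eqP/forallP => [fix_q k | vanish_q].
    by rewrite -sign_mul_eq -{2}fix_q mul_signmx_l.
  by apply/matrixP => i j; rewrite ord1 mul_signmx_l; apply/eqP; rewrite sign_mul_eq.
apply/eqP/forallP => [fix_J a | commJ].
  by apply/forallP => b; rewrite -sign_conj_eq -{2}fix_J mul_signmx_r mul_signmx_l.
apply/matrixP => a b; rewrite mul_signmx_r mul_signmx_l; apply/eqP.
by rewrite sign_conj_eq (forallP (commJ a)).
Qed.

Lemma sign_commute_zero J s a b : sign_commute J s -> s a != s b -> J a b = 0.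
Proof. by move=> /forallP /(_ a) /forallP /(_ b) /implyP sab /sab /eqP. Qed.

Lemma sign_commute_negb J b0 b1 b2 b3 :
  sign_commute J (sgn4 (~~ b0) (~~ b1) (~~ b2) (~~ b3)) = sign_commute J (sgn4 b0 b1 b2 b3).
Proof.
apply: eq_forallb => a; apply: eq_forallb => b; rewrite !ffunE.
have nthN (i : 'I_4) : nth false [:: ~~ b0; ~~ b1; ~~ b2; ~~ b3] i = ~~ nth false [:: b0; b1; b2; b3] i.
  by move: i; apply: ord4P.
by rewrite !nthN; case: (nth _ _ a); case: (nth _ _ b).
Qed.

Lemma sign_commute_const J b : sign_commute J (sgn4 b b b b).
Proof.
apply/forallP => a; apply/forallP => c; rewrite !ffunE.
have nth_const (i : 'I_4) : nth false [:: b; b; b; b] i = b by move: i; apply: ord4P.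
by rewrite !nth_const eqxx.
Qed.

Definition stable01 J := sign_commute J (sgn4 true true false false).
Definition stable02 J := sign_commute J (sgn4 true false true false).
Definition stable03 J := sign_commute J (sgn4 true false false true).

Definition vanishes (q : 'cV[R]_4) k := q k 0 == 0.

Lemma vanishes_all_eq0 (q : 'cV[R]_4) :
  [&& vanishes q o0, vanishes q o1, vanishes q o2 & vanishes q o3] = (q == 0).
Proof.
apply/and4P/eqP => [[/eqP q0 /eqP q1 /eqP q2 /eqP q3] | ->]; last by rewrite /vanishes !mxE eqxx.
by apply/matrixP => i j; rewrite ord1 mxE; move: i; apply: ord4P.
Qed.

Lemma fixes_point_sgn4 q b0 b1 b2 b3 : fixes_point q (sgn4 b0 b1 b2 b3) =
  [&& b0 ==> vanishes q o0, b1 ==> vanishes q o1, b2 ==> vanishes q o2 & b3 ==> vanishes q o3].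
Proof. by rewrite /fixes_point forall_ord4 !ffunE. Qed.

Lemma card_stab q J : #|stab q J| =
  (1 + [&& vanishes q o0, vanishes q o1, vanishes q o2 & vanishes q o3]
   + [&& vanishes q o0, vanishes q o1 & stable01 J] + [&& vanishes q o2, vanishes q o3 & stable01 J]
   + [&& vanishes q o0, vanishes q o2 & stable02 J] + [&& vanishes q o1, vanishes q o3 & stable02 J]
   + [&& vanishes q o0, vanishes q o3 & stable03 J] + [&& vanishes q o1, vanishes q o2 & stable03 J])%N.
Proof.
rewrite card_sgn4 !big_bool /= !stabE !inE !evenb_sgn4 !fixes_point_sgn4 /=.
rewrite /stable01 /stable02 /stable03 -(sign_commute_negb _ true true false false).
rewrite -(sign_commute_negb _ true false true false) -(sign_commute_negb _ true false false true) /=.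
rewrite !sign_commute_const !andbT !andbA.
lia.
Qed.

End Stabilizer.

Section ComplexStructure.
Variable R : realType.

Lemma mul_basis_vec (A : 'M[R]_4) a k : (A *m basis_vec R a) k 0 = A k a.
Proof.
rewrite mxE (bigD1 a) //= !mxE eqxx mulr1 big1 ?addr0 // => i /negbTE ia.
by rewrite !mxE ia mulr0.
Qed.

Lemma mulmx_basis_vec_single (A : 'M[R]_4) a b :
  (forall k, k != b -> A k a = 0) -> A *m basis_vec R a = A b a *: basis_vec R b.
Proof.
move=> A_a; apply/matrixP => k i; rewrite ord1 mul_basis_vec !mxE.
by have [->|kb] := eqVneq k b; rewrite ?mulr1 // mulr0 A_a.
Qed.

Variables (q : 'cV[R]_4) (J : 'M[R]_4).
Hypothesis tw : twistor_point q J.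

Lemma dot_cplx u v : dot (J *m u) (J *m v) = dot u v.
Proof.
case: tw => q_ball [_ [J_isom _]]; move: (J_isom u v); rewrite /hyp_metric.
apply: mulfI; rewrite mulf_neq0 ?invr_eq0 ?expf_eq0 ?pnatr_eq0 //= subr_eq0.
by apply/eqP => q1; move: q_ball; rewrite /in_ball -q1 ltxx.
Qed.

Lemma trmx_cplx : J^T = - J.
Proof.
have JtJ : J^T *m J = 1%:M.
  apply/matrixP => a b; rewrite !mxE.
  transitivity (dot (J *m basis_vec R a) (J *m basis_vec R b)).
    by apply: eq_bigr => i _; rewrite !mul_basis_vec mxE.
  rewrite dot_cplx /dot (bigD1 a) //= big1 => [|i /negbTE ia]; last by rewrite !mxE ia mul0r.
  by rewrite !mxE eqxx mul1r addr0 eq_sym.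
have -> : J^T = J^T *m (- (J *m J)) by rewrite tw.2.1 opprK mulmx1.
by rewrite mulmxN mulmxA JtJ mul1mx.
Qed.

Lemma cplx_skew a b : J a b = - J b a.
Proof. by have := congr1 (fun M : 'M[R]_4 => M b a) trmx_cplx; rewrite !mxE. Qed.

Lemma cplx_diag a : J a a = 0.
Proof. by have := cplx_skew a a; lra. Qed.

Lemma cplx_sqr_entry a b : (forall k, k != b -> J k a = 0) -> J b a ^+ 2 = 1.
Proof.
move=> J_a; have := congr1 (fun M : 'M[R]_4 => M a a) tw.2.1.
rewrite !mxE eqxx (bigD1 b) //= big1 => [|k kb]; last by rewrite J_a ?mulr0.
by rewrite addr0 cplx_skew mulNr expr2 => /oppr_inj.
Qed.

Lemma cplx_col_neq0 a : ~ (forall k, J k a = 0).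
Proof.
move=> J_a; have := cplx_sqr_entry (b := a) (fun k _ => J_a k).
by rewrite cplx_diag expr0n /= => /eqP; rewrite eq_sym oner_eq0.
Qed.

Lemma cplx_col_single s a b : sign_commute J s ->
  (forall k, s k = s a -> k = a \/ k = b) -> forall k, k != b -> J k a = 0.
Proof.
move=> commJ s_a k kb; have [ska|] := eqVneq (s k) (s a); last exact: sign_commute_zero.
by case: (s_a k ska) => [->|kb']; [exact: cplx_diag | move/eqP: kb].
Qed.

Lemma stable_unique : (stable01 J + stable02 J + stable03 J <= 1)%N.
Proof.
have isolate s t : sign_commute J s -> sign_commute J t ->
    (forall k, k != o0 -> (s k != s o0) || (t k != t o0)) -> False.
  move=> commJs commJt st; apply: (cplx_col_neq0 (a := o0)) => k.
  have [->|k0] := eqVneq k o0; first exact: cplx_diag.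
  by case/orP: (st k k0); [exact: sign_commute_zero commJs | exact: sign_commute_zero commJt].
rewrite /stable01 /stable02 /stable03.
case h1: (sign_commute J _); case h2: (sign_commute J _); case h3: (sign_commute J _) => //=;
  exfalso; first [apply: (isolate _ _ h1 h2) | apply: (isolate _ _ h1 h3)
                 | apply: (isolate _ _ h2 h3)]; by apply: ord4P; rewrite !ffunE.
Qed.

Ltac card_cases := rewrite card_stab; move: stable_unique;
  move: (stable01 J) (stable02 J) (stable03 J)
        (vanishes q o0) (vanishes q o1) (vanishes q o2) (vanishes q o3);
  do 7 case.

Lemma card_stab_cases : #|stab q J| \in [:: 1; 2; 4]%N.
Proof. by card_cases. Qed.

Lemma card_stab_eq4 : (#|stab q J| == 4%N) =
  [&& vanishes q o0, vanishes q o1, vanishes q o2 & vanishes q o3]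
  && [|| stable01 J, stable02 J | stable03 J].
Proof. by card_cases. Qed.

Lemma card_stab_gt1 : (1 < #|stab q J|)%N =
  [|| [&& vanishes q o0, vanishes q o1, vanishes q o2 & vanishes q o3],
      [&& vanishes q o0, vanishes q o1 & stable01 J], [&& vanishes q o2, vanishes q o3 & stable01 J],
      [&& vanishes q o0, vanishes q o2 & stable02 J], [&& vanishes q o1, vanishes q o3 & stable02 J],
      [&& vanishes q o0, vanishes q o3 & stable03 J] | [&& vanishes q o1, vanishes q o2 & stable03 J]].
Proof. by card_cases. Qed.

End ComplexStructure.

Section Lifts.
Variable R : realType.
Variables (q : 'cV[R]_4) (J : 'M[R]_4).
Hypothesis tw : twistor_point q J.

Lemma lift_of_stable_plane s i j : i != j -> sign_commute J s -> s j = s i ->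
  (forall k, s k = s i -> k = i \/ k = j) ->
  (forall k, k != i -> k != j -> q k 0 = 0) ->
  exists i' j', in_lift i' j' q J.
Proof.
move=> ij commJ sji s_i q_ij.
have s_j k : s k = s j -> k = j \/ k = i by rewrite sji => /s_i [] ->; [right | left].
have Je_i := mulmx_basis_vec_single (cplx_col_single tw commJ s_i).
have Je_j := mulmx_basis_vec_single (cplx_col_single tw commJ s_j).
have Jji_neq0 : J j i != 0.
  apply/eqP => Jji0; have := cplx_sqr_entry tw (cplx_col_single tw commJ s_i).
  by rewrite Jji0 expr0n => /eqP; rewrite eq_sym oner_eq0.
have [Jji_gt0 | Jji_le0] := ltrP 0 (J j i).
  exists i, j; do !split => //; exists 0, (J j i), (J i j), 0.
  by rewrite Je_i Je_j !scale0r add0r addr0.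
exists j, i; split; first by rewrite eq_sym.
split; first by move=> k kj ki; apply: q_ij.
exists 0, (J i j), (J j i), 0; rewrite Je_i Je_j !scale0r add0r addr0.
by rewrite (cplx_skew tw) oppr_gt0 lt_neqAle Jji_neq0 Jji_le0.
Qed.

Lemma lift_stab_gt1 i j : in_lift i j q J -> (1 < #|stab q J|)%N.
Proof.
case=> ij [q_ij [a [b [c [d [Je_i [Je_j _]]]]]]].
have J_out r k : r \notin [set i; j] -> k \in [set i; j] -> J r k = 0.
  rewrite !inE negb_or => /andP [ri rj] /orP [] /eqP ->.
    by have := congr1 (fun v : 'cV[R]_4 => v r 0) Je_i;
      rewrite mul_basis_vec !mxE (negbTE ri) (negbTE rj) !mulr0 addr0.
  by have := congr1 (fun v : 'cV[R]_4 => v r 0) Je_j;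
    rewrite mul_basis_vec !mxE (negbTE ri) (negbTE rj) !mulr0 addr0.
pose s := [ffun k => k \notin [set i; j]].
have supp_s : [set k | s k] = ~: [set i; j] by apply/setP => k; rewrite !inE ffunE !inE.
have card_s : #|[set k | s k]| = 2%N.
  by have := cardsC [set i; j]; rewrite supp_s cards2 ij card_ord; lia.
apply/card_gt1P; exists (sgn4 false false false false), s; split.
- by rewrite stabE inE evenb_sgn4 fixes_point_sgn4 sign_commute_const.
- rewrite stabE inE /evenb card_s /=; apply/andP; split.
    by apply/forallP => k; rewrite ffunE !inE negb_or; apply/implyP => /andP [ki kj]; apply/eqP/q_ij.
  apply/forallP => x; apply/forallP => y; rewrite !ffunE; apply/implyP => sxy; apply/eqP.
  have [x_in|x_out] := boolP (x \in [set i; j]); last by apply: J_out; move: sxy; rewrite x_out negbK.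
  by rewrite (cplx_skew tw) (J_out y x) ?oppr0 //; move: sxy; rewrite x_in /= negbK.
- apply/eqP => s_id; move: card_s; rewrite -s_id.
  suff -> : [set k | sgn4 false false false false k] = set0 by rewrite cards0.
  by apply/setP; apply: ord4P; rewrite !inE ffunE.
Qed.

End Lifts.

Section Frames.
Variable R : realType.

Definition ord4 (n : nat) : 'I_4 := match n with 0 => o0 | 1 => o1 | 2 => o2 | _ => o3 end.

Lemma det_mx4 (A : 'M[R]_4) : \det A =
    A o0 o0 * A o1 o1 * A o2 o2 * A o3 o3 - A o0 o0 * A o1 o1 * A o2 o3 * A o3 o2
    - A o0 o0 * A o1 o2 * A o2 o1 * A o3 o3 + A o0 o0 * A o1 o2 * A o2 o3 * A o3 o1
    + A o0 o0 * A o1 o3 * A o2 o1 * A o3 o2 - A o0 o0 * A o1 o3 * A o2 o2 * A o3 o1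
    - A o0 o1 * A o1 o0 * A o2 o2 * A o3 o3 + A o0 o1 * A o1 o0 * A o2 o3 * A o3 o2
    + A o0 o1 * A o1 o2 * A o2 o0 * A o3 o3 - A o0 o1 * A o1 o2 * A o2 o3 * A o3 o0
    - A o0 o1 * A o1 o3 * A o2 o0 * A o3 o2 + A o0 o1 * A o1 o3 * A o2 o2 * A o3 o0
    + A o0 o2 * A o1 o0 * A o2 o1 * A o3 o3 - A o0 o2 * A o1 o0 * A o2 o3 * A o3 o1
    - A o0 o2 * A o1 o1 * A o2 o0 * A o3 o3 + A o0 o2 * A o1 o1 * A o2 o3 * A o3 o0
    + A o0 o2 * A o1 o3 * A o2 o0 * A o3 o1 - A o0 o2 * A o1 o3 * A o2 o1 * A o3 o0
    - A o0 o3 * A o1 o0 * A o2 o1 * A o3 o2 + A o0 o3 * A o1 o0 * A o2 o2 * A o3 o1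
    + A o0 o3 * A o1 o1 * A o2 o0 * A o3 o2 - A o0 o3 * A o1 o1 * A o2 o2 * A o3 o0
    - A o0 o3 * A o1 o2 * A o2 o0 * A o3 o1 + A o0 o3 * A o1 o2 * A o2 o1 * A o3 o0.
Proof.
have -> : A = \matrix_(i < 4, j < 4) A (ord4 i) (ord4 j).
  by apply/matrixP; apply: ord4P; apply: ord4P; rewrite mxE.
do 3 rewrite !(expand_det_row _ ord0) /cofactor !big_ord_recr !big_ord0 /=.
rewrite !det_mx11 !mxE /bump /=; ring.
Qed.

Lemma mulmx_frame4 (A : 'M[R]_4) u v w z :
  A *m frame4 u v w z = frame4 (A *m u) (A *m v) (A *m w) (A *m z).
Proof.
apply/matrixP => i; apply: ord4P; rewrite !mxE;
  by apply: eq_bigr => k _; rewrite mxE.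
Qed.

Lemma det_frame4_scale u v w z (x y : R) :
  \det (frame4 u (x *: v) w (y *: z)) = x * y * \det (frame4 u v w z).
Proof.
pose d : 'rV[R]_4 := \row_k (match val k with 1 => x | 3 => y | _ => 1 end).
have -> : frame4 u (x *: v) w (y *: z) = frame4 u v w z *m diag_mx d.
  by apply/matrixP => i; apply: ord4P; rewrite mul_mx_diag !mxE /= ?mulr1 // mulrC.
by rewrite det_mulmx det_diag big_ord4 !mxE /=; ring.
Qed.

(* Two complex structures agreeing on [u] and [w] agree on the frame
   [(u, J u, w, J w)]; if it is a basis, they are equal. *)
Lemma cplx_eq_on_frame (J K : 'M[R]_4) u w :
  J *m J = - 1%:M -> K *m K = - 1%:M -> J *m u = K *m u -> J *m w = K *m w ->
  \det (frame4 u (J *m u) w (J *m w)) != 0 -> J = K.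
Proof.
move=> JJ KK Ju Jw det_neq0.
have F_unit : frame4 u (J *m u) w (J *m w) \in unitmx by rewrite unitmxE unitfE.
apply: (can_inj (mulmxK F_unit)); rewrite /= !mulmx_frame4.
by congr frame4; rewrite // mulmxA JJ ?Ju ?Jw mulmxA KK.
Qed.

End Frames.

Lemma eq_of_sqr1 (R : realDomainType) (x y : R) :
  x ^+ 2 = 1 -> y ^+ 2 = 1 -> 0 <= x * y -> x = y.
Proof.
move=> x2 y2 xy_ge0.
have : (x * y) ^+ 2 == 1 by rewrite exprMn x2 y2 mulr1.
rewrite sqrp_eq1 // => /eqP xy1.
apply/eqP; rewrite -subr_eq0 -sqrf_eq0.
have -> : (x - y) ^+ 2 = x ^+ 2 + y ^+ 2 - 2 * (x * y) by ring.
by rewrite x2 y2 xy1; apply/eqP; ring.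
Qed.

Section Uniqueness.
Variable R : realType.
Local Notation e := (basis_vec R).

Lemma frame4_col u v w z (k : 'I_4) : frame4 u v w z *m e k =
  match val k with 0 => u | 1 => v | 2 => w | _ => z end.
Proof. by apply/matrixP => i j; rewrite ord1 mul_basis_vec mxE. Qed.

Lemma twistor_point_opp q (K : 'M[R]_4) : twistor_point q K -> twistor_point q (- K).
Proof.
case=> q_ball [KK [K_isom K_or]]; split=> //; split; first by rewrite mulmxN mulNmx opprK.
split=> [u v | v w].
  rewrite -(K_isom u v) /hyp_metric /dot; congr (_ * _); apply: eq_bigr => i _.
  by rewrite !mulNmx !mxE mulrNN.
by rewrite !mulNmx -!scaleN1r det_frame4_scale mulN1r opprK mul1r.
Qed.

Lemma sign_commuteN (K : 'M[R]_4) s : sign_commute (- K) s = sign_commute K s.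
Proof. by apply: eq_forallb => a; apply: eq_forallb => b; rewrite mxE oppr_eq0. Qed.

Variables (q : 'cV[R]_4) (J : 'M[R]_4).
Hypothesis tw : twistor_point q J.

(* [J] is pinned down by the lines [J e_a] and [J e_c]; the orientation
   condition on the frame [(e_a, J e_a, e_c, J e_c)] fixes the relative sign. *)
Lemma cplx_unique (K : 'M[R]_4) a b c d :
  K *m K = - 1%:M -> K *m e a = e b -> K *m e c = e d ->
  \det (frame4 (e a) (e b) (e c) (e d)) = 1 ->
  (forall k, k != b -> J k a = 0) -> (forall k, k != d -> J k c = 0) ->
  J = K \/ J = - K.
Proof.
move=> KK Ka Kc det_abcd J_a J_c.
have Ja := mulmx_basis_vec_single J_a; have Jc := mulmx_basis_vec_single J_c.
have x2 := cplx_sqr_entry tw J_a; have y2 := cplx_sqr_entry tw J_c.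
have det_J : \det (frame4 (e a) (J *m e a) (e c) (J *m e c)) = J b a * J d c.
  by rewrite Ja Jc det_frame4_scale det_abcd mulr1.
have yx : J d c = J b a by apply/esym/eq_of_sqr1 => //; rewrite -det_J; apply: tw.2.2.2.
have det_neq0 : \det (frame4 (e a) (J *m e a) (e c) (J *m e c)) != 0.
  by rewrite det_J yx -expr2 x2 oner_eq0.
have JJ := tw.2.1; have [x1|xN1] : J b a = 1 \/ J b a = -1.
  by move/eqP: x2; rewrite sqrf_eq1 => /orP [] /eqP; [left | right].
- by left; apply: cplx_eq_on_frame det_neq0; rewrite // ?Ja ?Jc ?yx x1 scale1r.
- right; apply: cplx_eq_on_frame det_neq0; rewrite ?mulmxN ?mulNmx ?opprK //.
  + by rewrite Ja xN1 scaleN1r Ka.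
  + by rewrite Jc yx xN1 scaleN1r Kc.
Qed.

End Uniqueness.

Section Octahedron.
Variable R : realType.
Local Notation e := (basis_vec R).

Definition cplx01 : 'M[R]_4 := frame4 (e o1) (- e o0) (e o3) (- e o2).
Definition cplx02 : 'M[R]_4 := frame4 (e o2) (- e o3) (- e o0) (e o1).
Definition cplx03 : 'M[R]_4 := frame4 (e o3) (e o2) (- e o1) (- e o0).

Lemma in_ball0 : in_ball (0 : 'cV[R]_4).
Proof. by rewrite /in_ball /sqnorm big1 ?ltr01 // => i _; rewrite mxE expr0n. Qed.

Lemma cplx_sqr K : K \in [:: cplx01; cplx02; cplx03] -> K *m K = - 1%:M.
Proof.
by rewrite !inE => /or3P [] /eqP ->;
  apply/matrixP; apply: ord4P; apply: ord4P; rewrite !mxE big_ord4 !mxE /=; ring.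
Qed.

Lemma twistor_point_cplx K : K \in [:: cplx01; cplx02; cplx03] -> twistor_point 0 K.
Proof.
move=> K_std; split; first exact: in_ball0; split; first exact: cplx_sqr.
split=> [u v | v w].
  rewrite /hyp_metric; congr (_ * _); move: K_std; rewrite !inE => /or3P [] /eqP ->;
    by rewrite /dot !big_ord4 !mxE !big_ord4 !mxE /=; ring.
(* Each determinant is a sum of two squares of combinations of the Pluecker
   coordinates [v_i w_j - v_j w_i]. *)
move: K_std; rewrite !inE => /or3P [] /eqP ->.
- rewrite (_ : \det _ =
      (v o0 0 * w o2 0 - v o1 0 * w o3 0 - v o2 0 * w o0 0 + v o3 0 * w o1 0) ^+ 2
    + (v o0 0 * w o3 0 + v o1 0 * w o2 0 - v o2 0 * w o1 0 - v o3 0 * w o0 0) ^+ 2)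
    ?addr_ge0 ?sqr_ge0 //.
  by rewrite det_mx4 !mxE !big_ord4 !mxE /=; ring.
- rewrite (_ : \det _ =
      (v o0 0 * w o1 0 + v o2 0 * w o3 0 - v o1 0 * w o0 0 - v o3 0 * w o2 0) ^+ 2
    + (v o2 0 * w o1 0 - v o0 0 * w o3 0 - v o1 0 * w o2 0 + v o3 0 * w o0 0) ^+ 2)
    ?addr_ge0 ?sqr_ge0 //.
  by rewrite det_mx4 !mxE !big_ord4 !mxE /=; ring.
- rewrite (_ : \det _ =
      (v o0 0 * w o1 0 - v o3 0 * w o2 0 - v o1 0 * w o0 0 + v o2 0 * w o3 0) ^+ 2
    + (v o0 0 * w o2 0 + v o3 0 * w o1 0 - v o1 0 * w o3 0 - v o2 0 * w o0 0) ^+ 2)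
    ?addr_ge0 ?sqr_ge0 //.
  by rewrite det_mx4 !mxE !big_ord4 !mxE /=; ring.
Qed.

End Octahedron.

Arguments cplx01 {R}.
Arguments cplx02 {R}.
Arguments cplx03 {R}.

Section Classification.
Variable R : realType.

Lemma card_stab_gt1_iff q (J : 'M[R]_4) : twistor_point q J ->
  (1 < #|stab q J|)%N <-> in_fibre_p q J \/ exists i j, in_lift i j q J.
Proof.
move=> tw; split; last first.
  case=> [q0 | [i [j /(lift_stab_gt1 tw)]]] //.
  by rewrite (card_stab_gt1 tw) vanishes_all_eq0 q0 eqxx.
rewrite (card_stab_gt1 tw) vanishes_all_eq0.
case/or4P => [/eqP q0 | | | /or4P []]; first by left.
all: move=> /and3P [/eqP q_a /eqP q_b commJ]; right.
all: [> apply: (lift_of_stable_plane tw (i := o2) (j := o3) _ commJ)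
      | apply: (lift_of_stable_plane tw (i := o0) (j := o1) _ commJ)
      | apply: (lift_of_stable_plane tw (i := o1) (j := o3) _ commJ)
      | apply: (lift_of_stable_plane tw (i := o0) (j := o2) _ commJ)
      | apply: (lift_of_stable_plane tw (i := o1) (j := o2) _ commJ)
      | apply: (lift_of_stable_plane tw (i := o0) (j := o3) _ commJ) ].
all: rewrite ?ffunE //; apply: ord4P; rewrite ?ffunE //=; auto.
Qed.

Lemma sign_commute_cplx : [/\ stable01 (@cplx01 R), stable02 (@cplx02 R) & stable03 (@cplx03 R)].
Proof.
by split; apply/forallP; apply: ord4P; apply/forallP; apply: ord4P;
  rewrite !ffunE !mxE /= ?oppr0.
Qed.

Lemma stable_cplx q (J : 'M[R]_4) : twistor_point q J ->
  [/\ stable01 J -> J = cplx01 \/ J = - cplx01,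
      stable02 J -> J = cplx02 \/ J = - cplx02 &
      stable03 J -> J = cplx03 \/ J = - cplx03].
Proof.
move=> tw; split=> commJ.
all: [> apply: (cplx_unique tw (a := o0) (b := o1) (c := o2) (d := o3))
      | apply: (cplx_unique tw (a := o0) (b := o2) (c := o3) (d := o1))
      | apply: (cplx_unique tw (a := o0) (b := o3) (c := o1) (d := o2)) ].
all: first [ by apply: cplx_sqr; rewrite !inE eqxx ?orbT
           | by rewrite frame4_col
           | by rewrite det_mx4 !mxE /=; ring
           | by apply: (cplx_col_single tw commJ); apply: ord4P; rewrite !ffunE /=; auto ].
Qed.

Definition octahedron : seq ('cV[R]_4 * 'M[R]_4) :=
  [:: (0, cplx01); (0, - cplx01); (0, cplx02); (0, - cplx02); (0, cplx03); (0, - cplx03)].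

Lemma card_stab_eq4_octahedron q (J : 'M[R]_4) : twistor_point q J ->
  (#|stab q J| == 4%N) = ((q, J) \in octahedron).
Proof.
move=> tw; rewrite (card_stab_eq4 tw) (vanishes_all_eq0 q) !inE !xpair_eqE.
case: eqP => _ //=; have [s1 s2 s3] := stable_cplx tw.
apply/idP/idP.
  by case/or3P => [/s1 | /s2 | /s3] [] ->; rewrite eqxx ?orbT.
have [c1 c2 c3] := sign_commute_cplx; rewrite /stable01 /stable02 /stable03 in c1 c2 c3 *.
by case/or4P => [| | | /or3P []] /eqP ->; rewrite ?sign_commuteN ?c1 ?c2 ?c3 ?orbT.
Qed.

(* The first columns [±e_1], [±e_2], [±e_3] of the six vertices are distinct. *)
Lemma uniq_octahedron : uniq octahedron.
Proof.
apply: (@map_uniq _ _ (fun z : 'cV[R]_4 * 'M[R]_4 => z.2 o1 o0 + 2 * z.2 o2 o0 + 4 * z.2 o3 o0)).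
rewrite /= !mxE /= !inE !negb_or.
by repeat (apply/andP; split); try (apply/eqP; lra).
Qed.

Lemma octahedron_in_fibre z : z \in octahedron -> twistor_point z.1 z.2 /\ in_fibre_p z.1 z.2.
Proof.
rewrite !inE => /or4P [| | | /or3P []] /eqP -> /=; split=> //; try apply: twistor_point_opp;
  by apply: twistor_point_cplx; rewrite !inE eqxx ?orbT.
Qed.

Lemma mxdot_cplx :
  [/\ mxdot (R := R) cplx01 cplx02 = 0, mxdot (R := R) cplx01 cplx03 = 0
    & mxdot (R := R) cplx02 cplx03 = 0].
Proof. by split; rewrite /mxdot /mxtrace big_ord4 !mxE !big_ord4 !mxE /=; ring. Qed.

Lemma act_fibre s (K : 'M[R]_4) : act s (0, K) = (0, signmx R s *m K *m signmx R s).
Proof. by rewrite /act mulmx0. Qed.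

Lemma conj_signmx_eq (s : {ffun 'I_4 -> bool}) (K : 'M[R]_4) (c : R) :
  (forall i j, K i j != 0 -> (if s i then -1 else 1) * (if s j then -1 else 1) = c) ->
  signmx R s *m K *m signmx R s = c *: K.
Proof.
move=> Kc; apply/matrixP => i j; rewrite mul_signmx_r mul_signmx_l !mxE.
have [->|/Kc <-] := eqVneq (K i j) 0; first by rewrite !(mulr0, mul0r).
by rewrite mulrAC.
Qed.

Ltac sign_tac := by apply: ord4P; apply: ord4P;
  rewrite ?mxE !ffunE /= ?oppr0 ?eqxx ?mulN1r ?mulr1 ?mul1r ?opprK.

(* By parity, the two sign changes on each complex line of [K] agree. *)
Lemma conj_signmx_cplx s (K : 'M[R]_4) : s \in G -> K \in [:: cplx01; cplx02; cplx03] ->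
  exists2 c : R, c = 1 \/ c = -1 & signmx R s *m K *m signmx R s = c *: K.
Proof.
rewrite [s]sgn4_eta inE evenb_sgn4 !inE; move: (s o0) (s o1) (s o2) (s o3).
by do 4 case; move=> //= _ /or3P [] /eqP ->;
  first [ exists 1; [by left | apply: conj_signmx_eq; sign_tac]
        | exists (-1); [by right | apply: conj_signmx_eq; sign_tac] ].
Qed.

Lemma orbit_cplx (K : 'M[R]_4) : K \in [:: cplx01; cplx02; cplx03] -> forall z,
  (exists2 s, s \in G & act s (0, K) = z) <-> z = (0, K) \/ z = (0, - K).
Proof.
move=> K_std z; split=> [[s sG <-] | [] ->].
- have [c [] -> conjK] := conj_signmx_cplx sG K_std; rewrite act_fibre conjK.
    by rewrite scale1r; left.
  by rewrite scaleN1r; right.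
- exists (sgn4 false false false false); first by rewrite inE evenb_sgn4.
  by rewrite act_fibre (conj_signmx_eq (c := 1)) ?scale1r //; sign_tac.
- move: K_std; rewrite !inE => /or3P [] /eqP ->;
    [exists (sgn4 true false true false) | exists (sgn4 true true false false)
    | exists (sgn4 true true false false)];
    by rewrite ?inE ?evenb_sgn4 // act_fibre (conj_signmx_eq (c := -1)) ?scaleN1r //; sign_tac.
Qed.

End Classification.

Theorem lemma2p1 (R : realType) :
  (forall (q : 'cV[R]_4) (J : 'M[R]_4), twistor_point q J ->
     (1 < #|stab q J|)%N -> #|stab q J| = 2%N \/ #|stab q J| = 4%N) /\
  (exists J1 J2 J3 : 'M[R]_4,
     let S := [:: (0 : 'cV[R]_4, J1); (0, - J1); (0, J2); (0, - J2);
                  (0, J3); (0, - J3)] in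
     uniq S /\
     (forall z, z \in S -> twistor_point z.1 z.2 /\ in_fibre_p z.1 z.2) /\
     (forall (q : 'cV[R]_4) (J : 'M[R]_4), twistor_point q J ->
        (#|stab q J| = 4%N <-> (q, J) \in S)) /\
     mxdot J1 J2 = 0 /\ mxdot J1 J3 = 0 /\ mxdot J2 J3 = 0 /\
     (forall K : 'M[R]_4, K \in [:: J1; J2; J3] ->
        forall z : 'cV[R]_4 * 'M[R]_4,
          (exists2 s, s \in G & act s (0, K) = z) <->
          (z = (0, K) \/ z = (0, - K)))) /\
  (forall (q : 'cV[R]_4) (J : 'M[R]_4), twistor_point q J ->
     (#|stab q J| = 2%N <->
       ((in_fibre_p q J \/ exists i j : 'I_4, in_lift i j q J)
        /\ #|stab q J| <> 4%N))).
Proof.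
have card_cases (q : 'cV[R]_4) J (tw : twistor_point q J) :
    (1 < #|stab q J|)%N -> #|stab q J| = 2%N \/ #|stab q J| = 4%N.
  by have := card_stab_cases tw; rewrite !inE => /or3P [] /eqP ->; auto.
split; first exact: card_cases.
split.
  have [d12 d13 d23] := mxdot_cplx R.
  exists cplx01, cplx02, cplx03; split; first exact: uniq_octahedron.
  split; first exact: octahedron_in_fibre.
  split; first by move=> q J tw; rewrite -(card_stab_eq4_octahedron tw); split=> /eqP.
  by do 3 (split=> //); apply: orbit_cplx.
move=> q J tw; rewrite -(card_stab_gt1_iff tw); split=> [card2 | [gt1 card_neq4]].
  by rewrite card2; split=> // /eqP.
by case: (card_cases q J tw gt1).
Qed.
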